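(* Let $a,b\ge1$ be integers with $|a-b|\le4$ and let $n=a+b+2$. Then $\operatorname{diam}(\mathcal{C}_3(S(a,b)))=\lfloor 3n/2\rfloor$.
   Context: The double star $S(a,b)$ is the tree obtained by joining the centers of the stars $K_{1,a}$ and $K_{1,b}$ by an edge; it has $a+b+2$ vertices. A proper 3-coloring of a tree $T=(V,E)$ is a map $f\colon V\to\mathbb{Z}/3\mathbb{Z}$ with $f(u)\neq f(v)$ for every edge $uv\in E$. The 3-coloring graph $\mathcal{C}_3(T)$ has the proper 3-colorings as vertices, two colorings adjacent iff they differ at exactly one vertex; $\operatorname{diam}$ denotes graph diameter. *)

From mathcomp Require Import all_boot all_algebra.
Set Implicit Arguments. Unset Strict Implicit. Unset Printing Implicit Defensive.

(* Double star S(a,b) on vertex set 'I_(a+b+2):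
   vertex 0 = centre of K_{1,a}, vertex 1 = centre of K_{1,b},
   leaves 2 .. a+1 attached to 0, leaves a+2 .. a+b+1 attached to 1. *)
Definition dstar_adj0 (a : nat) (u v : nat) : bool :=
  [|| (u == 0) && (v == 1),
      (u == 0) && (2 <= v < a + 2)
    | (u == 1) && (a + 2 <= v)].

Definition double_star (a b : nat) : rel 'I_(a + b + 2) :=
  fun u v => dstar_adj0 a u v || dstar_adj0 a v u.
Arguments double_star : clear implicits.

Definition proper3 (T : finType) (e : rel T) (f : {ffun T -> 'Z_3}) : bool :=
  [forall u, forall v, e u v ==> (f u != f v)].

Definition col_adj (T : finType) (e : rel T) : rel {ffun T -> 'Z_3} :=
  fun f g => [&& proper3 e f, proper3 e g & #|[set x | f x != g x]| == 1].

Definition dist_le (V : finType) (r : rel V) (x y : V) (k : nat) : Prop :=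
  exists p : seq V, [/\ path r x p, last x p = y & size p <= k].

Definition diam_eq (V : finType) (P : pred V) (r : rel V) (D : nat) : Prop :=
  (forall x y, P x -> P y -> dist_le r x y D) /\
  (exists x y, [/\ P x, P y & forall k, k < D -> ~ dist_le r x y k]).

From mathcomp Require Import all_boot all_algebra.
From mathcomp Require Import zify.
Set Implicit Arguments. Unset Strict Implicit. Unset Printing Implicit Defensive.

(* A proper 3-colouring of S(a,b) is a pair of distinct centre colours together with leaf
   colours avoiding the colour of their own centre.  A centre can change colour only when all
   of its leaves carry the colour of the other centre, and then its new colour is forced; so
   the centre pairs move along a 6-cycle.
   Upper bound: go around the 6-cycle in either direction, before each centre move realigning
   the leaves of that centre, and finish by recolouring the leaves one by one.  The two
   directions together use at most 6 centre moves and change each leaf at most 3 times, or at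
   most 2 times on one side and 4 on the other with only 2 centre moves; so when |a - b| <= 4
   they cost at most 3n together and one of them costs at most floor(3n/2).
   Lower bound: from the colouring with centres (0,1) and every leaf coloured like the opposite
   centre to the colouring with centres (1,0) whose leaves are split at index n/2, every walk
   passes along one of the two halves of the 6-cycle; each half forces every vertex to change
   and the leaves of one half of the split to change twice. *)

Definition bools := [:: false; true].

Lemma mem_bools (t : bool) : t \in bools.
Proof. by case: t. Qed.

Definition Z3_enum : seq 'Z_3 := [:: 0; 1; 2]%R.

Lemma mem_Z3_enum (x : 'Z_3) : x \in Z3_enum.
Proof. by case: x => [[|[|[|m]]] //]. Qed.

Definition third (x y : 'Z_3) : 'Z_3 := (- (x + y))%R.

Lemma third_spec : all (fun x => all (fun y => all (fun z =>
  (x != y) ==> [&& third x y != x, third x y != y &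
                   (z != x) ==> (z != y) ==> (z == third x y)])
  Z3_enum) Z3_enum) Z3_enum.
Proof. by []. Qed.

Lemma third_neq x y : x != y -> third x y != x /\ third x y != y.
Proof.
move=> xy; have := allP (allP (allP third_spec x (mem_Z3_enum x)) y (mem_Z3_enum y)) x.
by rewrite mem_Z3_enum xy => /(_ isT) /and3P [].
Qed.

Lemma third_unique x y z : x != y -> z != x -> z != y -> z = third x y.
Proof.
move=> xy zx zy; apply/eqP.
have := allP (allP (allP third_spec x (mem_Z3_enum x)) y (mem_Z3_enum y)) z.
by rewrite mem_Z3_enum xy zx zy => /(_ isT) /and3P [].
Qed.

(** * Walks and colourings *)

Section Walks.
Variables (V : finType) (r : rel V).

Lemma dist_le0 x : dist_le r x x 0.
Proof. by exists [::]. Qed.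

Lemma dist_le1 x y : r x y -> dist_le r x y 1.
Proof. by move=> rxy; exists [:: y]; rewrite /= rxy. Qed.

Lemma dist_le_trans x y z m n :
  dist_le r x y m -> dist_le r y z n -> dist_le r x z (m + n).
Proof.
case=> p [rp <- sp] [q [rq <- sq]]; exists (p ++ q).
by rewrite cat_path rp rq last_cat size_cat leq_add.
Qed.

Lemma dist_le_leq x y m n : m <= n -> dist_le r x y m -> dist_le r x y n.
Proof. by move=> mn [p [rp lp sp]]; exists p; rewrite (leq_trans sp). Qed.

End Walks.

Section Colourings.
Variables (T : finType) (e : rel T).
Implicit Types (f g h k : {ffun T -> 'Z_3}) (p : seq {ffun T -> 'Z_3}).

Lemma proper3P f : reflect (forall u v, e u v -> f u != f v) (proper3 e f).
Proof.
apply: (iffP forallP) => [P u v euv | P u]; first exact: (implyP (forallP (P u) v)).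
by apply/forallP => v; apply/implyP/P.
Qed.

Lemma card_diffE f g : #|[set x | f x != g x]| = \sum_x (f x != g x).
Proof.
by rewrite -sum1_card big_mkcond; apply: eq_bigr => x _; rewrite inE; case: (_ != _).
Qed.

Lemma recolour_independent f g :
  proper3 e f -> proper3 e g ->
  {in [set x | f x != g x] &, forall u v, ~~ e u v} ->
  dist_le (col_adj e) f g #|[set x | f x != g x]|.
Proof.
move Ek: #|_| => k; elim: k f Ek => [|k IH] f Ek Pf Pg indep.
  suff -> : f = g by apply: dist_le0.
  apply/ffunP => x; apply/eqP; apply: contraT => fgx.
  by move/eqP: Ek; rewrite cards_eq0 => /eqP/setP/(_ x); rewrite !inE fgx.
have [x Dx] : exists x, x \in [set x | f x != g x].
  by apply/set0Pn; rewrite -card_gt0 Ek.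
set f1 := [ffun y => if y == x then g x else f y].
have D1 : [set y | f1 y != g y] = [set y | f y != g y] :\ x.
  by apply/setP => y; rewrite !inE ffunE; case: (y =P x) => [->|]; rewrite ?eqxx.
(* The neighbours of [x] are outside the independent set, so they already agree with [g]. *)
have agree y : e x y || e y x -> f1 y = g y.
  move=> exy; rewrite ffunE; case: (y =P x) => [-> //|_]; apply/eqP.
  apply: contraTT exy => fgy; rewrite negb_or.
  by rewrite !indep // inE.
have Pf1 : proper3 e f1.
  apply/proper3P => u v euv; move/proper3P: Pg => Pg; move/proper3P: Pf => Pf.
  case: (u =P x) => [ux|/eqP ux]; subst.
    by rewrite ffunE eqxx agree ?euv //; apply: Pg.
  case: (v =P x) => [vx|/eqP vx]; subst.
    by rewrite [f1 x]ffunE eqxx agree ?euv ?orbT //; apply: Pg.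
  by rewrite !ffunE (negbTE ux) (negbTE vx) Pf.
have step : col_adj e f f1.
  apply/and3P; split => //; apply/cards1P; exists x; apply/setP => y.
  by rewrite !inE ffunE; case: (y =P x) => [->|]; rewrite ?eqxx //; rewrite inE in Dx.
rewrite -[k.+1]add1n; apply: dist_le_trans (dist_le1 step) (IH _ _ Pf1 Pg _).
  by move: Ek; rewrite D1 (cardsD1 x) Dx => -[].
by move=> u v; rewrite D1 => /setD1P [_ Du] /setD1P [_ Dv]; apply: indep.
Qed.

Fixpoint changes x h p : nat :=
  if p is h' :: p' then (h x != h' x) + changes x h' p' else 0.

Lemma size_walk_changes h p : path (col_adj e) h p -> size p = \sum_x changes x h p.
Proof.
elim: p h => [|h' p IH] h /=; first by rewrite big1.
by case/andP=> /and3P [_ _ /eqP one] /IH ->; rewrite big_split /= -card_diffE one.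
Qed.

Lemma changes_via x h p k :
  k \in h :: p -> (h x != k x) + (k x != last h p x) <= changes x h p.
Proof.
have neq_tri (y z t : 'Z_3) : (y != t) <= (y != z) + (z != t).
  by case: (y =P z) => [->|_]; [rewrite add0n | case: (_ != t); case: (_ != t)].
elim: p h k => [|h' p IH] h k /=; first by rewrite inE => /eqP ->; rewrite eqxx.
rewrite inE => /orP [/eqP ->|kp].
  rewrite eqxx add0n (leq_trans (neq_tri _ (h' x) _)) // leq_add2l.
  by have := IH h' h' (mem_head _ _); rewrite eqxx add0n.
by rewrite (leq_trans (leq_add (neq_tri _ (h' x) _) (leqnn _))) // -addnA leq_add2l IH.
Qed.

Lemma walk_lower_bound h p (w : T -> nat) : path (col_adj e) h p ->
  (forall x, exists2 k, k \in h :: p & w x <= (h x != k x) + (k x != last h p x)) ->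
  \sum_x w x <= size p.
Proof.
move=> hp wk; rewrite (size_walk_changes hp) leq_sum // => x _.
by have [k kp /leq_trans->] := wk x; rewrite ?changes_via.
Qed.

End Colourings.

(** * The centre model *)

(* A pair [c] lists the colours of centre [false] (of the [a] leaves) and centre [true];
   [other s c] is the colour of the centre that is not [s]. *)
Definition other (s : bool) (c : 'Z_3 * 'Z_3) : 'Z_3 := if s then c.1 else c.2.

Definition flip_pair (s : bool) (c : 'Z_3 * 'Z_3) : 'Z_3 * 'Z_3 :=
  if s then (c.1, third c.1 c.2) else (third c.1 c.2, c.2).

(* Flipping centre [s] first recolours the leaves of [s] with [other s c]; the following
   functions track one leaf of centre [t] with colour [l] along a route [rt] of flips. *)
Definition leaf_step (s t : bool) (c : 'Z_3 * 'Z_3) (l : 'Z_3) : 'Z_3 :=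
  if s == t then other s c else l.

Fixpoint run_pair (rt : seq bool) (c : 'Z_3 * 'Z_3) : 'Z_3 * 'Z_3 :=
  if rt is s :: rt' then run_pair rt' (flip_pair s c) else c.

Fixpoint run_leaf (rt : seq bool) (t : bool) (c : 'Z_3 * 'Z_3) (l : 'Z_3) : 'Z_3 :=
  if rt is s :: rt' then run_leaf rt' t (flip_pair s c) (leaf_step s t c l) else l.

Fixpoint leaf_cost (rt : seq bool) (t : bool) (c : 'Z_3 * 'Z_3) (l : 'Z_3) : nat :=
  if rt is s :: rt' then
    (l != leaf_step s t c l) + leaf_cost rt' t (flip_pair s c) (leaf_step s t c l)
  else 0.

Definition leaf_weight (rt : seq bool) (t : bool) (c : 'Z_3 * 'Z_3) (l l' : 'Z_3) : nat :=
  leaf_cost rt t c l + (run_leaf rt t c l != l').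

Fixpoint alternating (s : bool) (k : nat) : seq bool :=
  if k is k'.+1 then s :: alternating (~~ s) k' else [::].

Definition routes : seq (seq bool) := [seq alternating s k | s <- bools, k <- iota 0 6].

(* [(L, W0, W1)]: at most [L] centre flips in the two routes together, and at most [W0]
   (resp. [W1]) changes of a leaf of centre [false] (resp. [true]) in the two routes. *)
Definition budgets : seq (nat * nat * nat) := [:: (6, 3, 3); (2, 2, 4); (2, 4, 2)].

Definition good_routes (c c' : 'Z_3 * 'Z_3) (R1 R2 : seq bool) (B : nat * nat * nat) :=
  let: (L, W0, W1) := B in
  [&& run_pair R1 c == c', run_pair R2 c == c', size R1 + size R2 <= L &
      all (fun t => all (fun l => all (fun l' =>
        (l != other (~~ t) c) && (l' != other (~~ t) c') ==>
        (leaf_weight R1 t c l l' + leaf_weight R2 t c l l' <= if t then W1 else W0))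
      Z3_enum) Z3_enum) bools].

Lemma good_routes_table : all (fun x => all (fun y => all (fun x' => all (fun y' =>
  (x != y) && (x' != y') ==>
  has (fun R1 => has (fun R2 => has (good_routes (x, y) (x', y') R1 R2) budgets) routes) routes)
  Z3_enum) Z3_enum) Z3_enum) Z3_enum.
Proof. lazy; reflexivity. Qed.

Lemma good_routes_exist c c' : c.1 != c.2 -> c'.1 != c'.2 ->
  exists R1 R2 B, B \in budgets /\ good_routes c c' R1 R2 B.
Proof.
case: c c' => x y [x' y'] /= xy xy'.
have := allP (allP (allP (allP good_routes_table x (mem_Z3_enum x)) y (mem_Z3_enum y))
          x' (mem_Z3_enum x')) y' (mem_Z3_enum y').
rewrite xy xy' => /implyP/(_ isT) /hasP [R1 _ /hasP [R2 _ /hasP [B inB ok]]].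
by exists R1, R2, B.
Qed.

Lemma budget_bound L W0 W1 a b : (L, W0, W1) \in budgets -> a <= b + 4 -> b <= a + 4 ->
  L + W0 * a + W1 * b <= 3 * (a + b + 2).
Proof. by rewrite !inE => /or3P [] /eqP [-> -> ->]; lia. Qed.

(* Going from (0,1) to (1,0) around the 6-cycle of centre pairs passes either through
   (2,1),(2,0) or through (0,2),(1,2).  The flags record the moves of centre [true] while
   centre [false] has colour 2 ([b2]) or 1 ([b1]), and of centre [false] while centre [true]
   has colour 0 ([a0]) or 2 ([a2]). *)
Definition reach_inv (c : 'Z_3 * 'Z_3) (b2 a0 a2 b1 : bool) : bool :=
  [&& (c == (2, 0)%R) ==> b2 || a2 && b1,
      (c == (1, 0)%R) ==> b2 && a0 || a2 && b1 &
      (c == (1, 2)%R) ==> a2 || b2 && a0].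

Lemma reach_inv_mono c (b2 a0 a2 b1 b2' a0' a2' b1' : bool) :
  reach_inv c b2 a0 a2 b1 -> b2 ==> b2' -> a0 ==> a0' -> a2 ==> a2' -> b1 ==> b1' ->
  reach_inv c b2' a0' a2' b1'.
Proof.
rewrite /reach_inv; case: (c == _); case: (c == _); case: (c == _);
by case: b2 b2' a0 a0' a2 a2' b1 b1' => [] [] [] [] [] [] [] [].
Qed.

Lemma reach_inv_flip_table : all (fun x => all (fun y => all (fun s =>
  all (fun b2 => all (fun a0 => all (fun a2 => all (fun b1 =>
  let k := other s (x, y) in
  (x != y) && reach_inv (x, y) b2 a0 a2 b1 ==>
  reach_inv (flip_pair s (x, y))
    (b2 || (s == true) && (k == 2%R)) (a0 || (s == false) && (k == 0%R))
    (a2 || (s == false) && (k == 2%R)) (b1 || (s == true) && (k == 1%R)))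
  bools) bools) bools) bools) bools) Z3_enum) Z3_enum.
Proof. by []. Qed.

Lemma sum_range n lo hi : \sum_(i < n) (lo <= i < hi) = minn hi n - lo.
Proof.
elim: n => [|n IH]; first by rewrite big_ord0; lia.
by rewrite big_ord_recr /= IH; case: (lo <= n) /idP; case: (n < hi) /idP => /=; lia.
Qed.

(** * The double star *)

Section DoubleStar.
Variables a b : nat.

Local Notation V := 'I_(a + b + 2).
Local Notation G := (double_star a b).
Local Notation colouring := {ffun V -> 'Z_3}.
Implicit Types (f g h : colouring) (u v : V) (s : bool).

Definition c0 : V := Ordinal (ltn_addl (a + b) (isT : 0 < 2)).
Definition c1 : V := Ordinal (ltn_addl (a + b) (isT : 1 < 2)).
Definition centre s : V := if s then c1 else c0.
Definition side v : bool := a + 2 <= v.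
Definition parent v : V := if 2 <= v then centre (side v) else c0.

Lemma double_starE u v :
  G u v = (v != c0) && (u == parent v) || (u != c0) && (v == parent u).
Proof.
suff adjE (x y : V) : dstar_adj0 a x y = (y != c0) && (x == parent y) by rewrite /double_star !adjE.
case: x y => [x hx] [y hy]; rewrite /dstar_adj0 /parent /side /=.
case: (leqP 2 y) => y2; [case: (leqP (a + 2) y) => ya|]; rewrite -!val_eqE /=; lia.
Qed.

Lemma centre_cases v : v < 2 -> v = c0 \/ v = c1.
Proof. by case: v => [[|[|m]] hm] //= _; [left | right]; apply: val_inj. Qed.

Lemma parent_lt2 v : parent v < 2.
Proof. by rewrite /parent /centre; case: ifP => //; case: side. Qed.

Lemma proper_dsP h :
  reflect (h c0 != h c1 /\ forall v, 2 <= v -> h v != h (centre (side v)))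
          (proper3 G h).
Proof.
apply: (iffP (proper3P _ _)) => [P | [P01 Pl] u v].
  split; first by apply: P; rewrite double_starE.
  move=> v v2; rewrite eq_sym; apply: P.
  rewrite double_starE; apply/orP; left; rewrite /parent v2 eqxx andbT.
  by apply/eqP => v0; rewrite v0 in v2.
have child x y : y != c0 -> x = parent y -> h x != h y.
  rewrite /parent; case: ifP => [y2 _ -> | /negbT]; first by rewrite eq_sym Pl.
  by rewrite -ltnNge => /centre_cases [->|->] // _ ->.
by rewrite double_starE => /orP [] /andP [/child Pc /eqP /Pc] //; rewrite eq_sym.
Qed.

Lemma leaves_independent u v : 2 <= u -> 2 <= v -> ~~ G u v.
Proof.
have np (x y : V) : 2 <= x -> (x == parent y) = false.
  by move=> x2; apply: contraTF x2 => /eqP ->; rewrite -ltnNge parent_lt2.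
by move=> u2 v2; rewrite double_starE !np ?andbF.
Qed.

Definition centres h := (h c0, h c1).

Lemma recolour_leaves f g : proper3 G f -> proper3 G g -> centres f = centres g ->
  dist_le (col_adj G) f g (\sum_v (f v != g v)).
Proof.
move=> Pf Pg [e0 e1]; rewrite -card_diffE; apply: recolour_independent => // u v.
have leaf x : x \in [set y | f y != g y] -> 2 <= x.
  by rewrite inE leqNgt; apply: contraNN => /centre_cases [] ->; rewrite ?e0 ?e1.
by move=> /leaf u2 /leaf v2; apply: leaves_independent.
Qed.

Definition align s h : colouring :=
  [ffun v : V => if 2 <= v then leaf_step s (side v) (centres h) (h v) else h v].

Definition flip s h : colouring :=
  [ffun v : V => if v == centre s then third (h c0) (h c1) else align s h v].

Lemma other_centres s h : other s (centres h) = h (centre (~~ s)).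
Proof. by case: s. Qed.

Lemma align_centre s t h : align s h (centre t) = h (centre t).
Proof. by rewrite ffunE; case: t. Qed.

Lemma flip_centre s t h :
  flip s h (centre t) = if t == s then third (h c0) (h c1) else h (centre t).
Proof. by rewrite ffunE align_centre; case: s; case: t. Qed.

Lemma flip_leaf s h v : 2 <= v -> flip s h v = leaf_step s (side v) (centres h) (h v).
Proof.
move=> v2; rewrite !ffunE v2; case: eqP => // vs.
by move: v2; rewrite vs; case: (s).
Qed.

Lemma centres_flip s h : centres (flip s h) = flip_pair s (centres h).
Proof. by rewrite /centres !ffunE; case: s. Qed.

Lemma proper_align s h : proper3 G h -> proper3 G (align s h).
Proof.
case/proper_dsP => P01 Pl; apply/proper_dsP; split; first by rewrite !ffunE.
move=> v v2; rewrite align_centre ffunE v2 /leaf_step other_centres.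
case: (s =P side v) => [-> | _]; last exact: Pl.
by case: (side v); rewrite // eq_sym.
Qed.

Lemma proper_flip s h : proper3 G h -> proper3 G (flip s h).
Proof.
case/proper_dsP => P01 Pl; have [t0 t1] := third_neq P01.
apply/proper_dsP; split.
  rewrite [flip s h c0](f_equal fst (centres_flip s h)).
  rewrite [flip s h c1](f_equal snd (centres_flip s h)).
  by case: s; rewrite //= eq_sym.
move=> v v2; rewrite flip_leaf // flip_centre /leaf_step [side v == s]eq_sym.
case: (s =P side v) => _; last exact: Pl.
by rewrite other_centres; case: s; rewrite /= eq_sym.
Qed.

Lemma flip_dist s h : proper3 G h ->
  dist_le (col_adj G) h (flip s h)
    (1 + \sum_(v : V) (2 <= v) * (h v != leaf_step s (side v) (centres h) (h v))).
Proof.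
move=> Ph; have [P01 _] := proper_dsP _ Ph; have [t0 t1] := third_neq P01.
have edge : col_adj G (align s h) (flip s h).
  apply/and3P; split; [exact: proper_align | exact: proper_flip |].
  apply/cards1P; exists (centre s); apply/setP => v; rewrite !inE [flip s h v]ffunE.
  case: (v =P centre s) => [-> | _]; last by rewrite eqxx.
  by rewrite align_centre eq_sym; case: s.
rewrite [1 + _]addnC; apply: dist_le_trans (dist_le1 edge).
have -> : \sum_(v : V) (2 <= v) * (h v != leaf_step s (side v) (centres h) (h v)) =
          \sum_v (h v != align s h v).
  by apply: eq_bigr => v _; rewrite ffunE; case: (2 <= v); rewrite ?mul1n ?eqxx.
by apply: recolour_leaves; rewrite ?proper_align // /centres !ffunE.
Qed.

Fixpoint run rt h : colouring := if rt is s :: rt' then run rt' (flip s h) else h.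

Lemma proper_run rt h : proper3 G h -> proper3 G (run rt h).
Proof. by elim: rt h => //= s rt IH h /(proper_flip s) /IH. Qed.

Lemma centres_run rt h : centres (run rt h) = run_pair rt (centres h).
Proof. by elim: rt h => //= s rt IH h; rewrite IH centres_flip. Qed.

Lemma run_leafE rt h v : 2 <= v -> run rt h v = run_leaf rt (side v) (centres h) (h v).
Proof. by move=> v2; elim: rt h => //= s rt IH h; rewrite IH centres_flip flip_leaf. Qed.

Lemma run_dist rt h : proper3 G h ->
  dist_le (col_adj G) h (run rt h)
    (size rt + \sum_(v : V) (2 <= v) * leaf_cost rt (side v) (centres h) (h v)).
Proof.
elim: rt h => [|s rt IH] h Ph /=.
  by rewrite big1 => [|v _]; [apply: dist_le0 | rewrite muln0].
have := dist_le_trans (flip_dist s Ph) (IH _ (proper_flip s Ph)).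
apply: dist_le_leq; rewrite centres_flip.
rewrite [X in _ <= _ + X](eq_bigr (fun v : V => (2 <= v) * (h v != leaf_step s (side v) (centres h) (h v)) +
    (2 <= v) * leaf_cost rt (side v) (flip_pair s (centres h)) (flip s h v))).
  by rewrite big_split /=; lia.
move=> v _; rewrite -mulnDr; case: (leqP 2 v) => [v2|]; last by rewrite !mul0n.
by rewrite flip_leaf.
Qed.

Lemma route_dist rt f g : proper3 G f -> proper3 G g ->
  run_pair rt (centres f) = centres g ->
  dist_le (col_adj G) f g
    (size rt + \sum_(v : V) (2 <= v) * leaf_weight rt (side v) (centres f) (f v) (g v)).
Proof.
move=> Pf Pg fg; have Rg : centres (run rt f) = centres g by rewrite centres_run.
have := dist_le_trans (run_dist rt Pf) (recolour_leaves (proper_run rt Pf) Pg Rg).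
apply: dist_le_leq; rewrite -addnA leq_add2l -big_split leq_sum // => v _.
rewrite /leaf_weight mulnDr leq_add2l; case: (leqP 2 v) => [v2|].
  by rewrite mul1n run_leafE.
by case: Rg => e0 e1 /centre_cases [] ->; rewrite ?e0 ?e1 eqxx.
Qed.

Lemma sum_leaves (W : bool -> nat) :
  \sum_(v : V) (2 <= v) * W (side v) = W false * a + W true * b.
Proof.
rewrite (eq_bigr (fun v : V => W false * (2 <= v < a + 2) + W true * (a + 2 <= v < a + b + 2))).
  by rewrite big_split /= -!big_distrr /= !sum_range; congr (_ * _ + _ * _); lia.
move=> v _; have := ltn_ord v; rewrite /side.
by case: (leqP 2 v) => v2; case: (leqP (a + 2) v) => va /= vn; rewrite ?vn /=; lia.
Qed.

Lemma dist_upper f g : a <= b + 4 -> b <= a + 4 -> proper3 G f -> proper3 G g ->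
  dist_le (col_adj G) f g (3 * (a + b + 2) %/ 2).
Proof.
move=> ab ba Pf Pg; have [P01f Plf] := proper_dsP _ Pf; have [P01g Plg] := proper_dsP _ Pg.
have [R1 [R2 [[[L W0] W1] [inB]]]] := @good_routes_exist (centres f) (centres g) P01f P01g.
case/and4P => /eqP E1 /eqP E2 sizeL weightW.
have D1 := route_dist Pf Pg E1; have D2 := route_dist Pf Pg E2.
set d1 := size R1 + _ in D1; set d2 := size R2 + _ in D2.
have : d1 + d2 <= 3 * (a + b + 2).
  apply: leq_trans (budget_bound inB ab ba); rewrite /d1 /d2 addnACA -[L + _ + _]addnA leq_add //.
  rewrite -big_split -(sum_leaves (fun t => if t then W1 else W0)) leq_sum // => v _ /=.
  rewrite -mulnDr; case: (leqP 2 v) => v2; last by rewrite !mul0n.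
  have := allP (allP (allP weightW _ (mem_bools (side v))) _ (mem_Z3_enum (f v)))
            _ (mem_Z3_enum (g v)).
  by rewrite !other_centres !negbK Plf ?Plg // /= !mul1n.
case: (leqP d1 (3 * (a + b + 2) %/ 2)) => [d1le _ | d1gt total].
  exact: dist_le_leq d1le D1.
by apply: dist_le_leq D2; lia.
Qed.

Definition aligned s k h :=
  (h (centre (~~ s)) == k) && [forall v : V, (2 <= v) && (side v == s) ==> (h v == k)].

Lemma alignedP s k h :
  aligned s k h -> h (centre (~~ s)) = k /\ forall v, 2 <= v -> side v = s -> h v = k.
Proof.
case/andP => /eqP hc /forallP hl; split => // v v2 vs.
by apply/eqP; move/implyP: (hl v); apply; rewrite v2 vs eqxx.
Qed.

Lemma centre_step s h h' : col_adj G h h' -> h (centre s) != h' (centre s) ->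
  centres h' = flip_pair s (centres h) /\ aligned s (other s (centres h)) h'.
Proof.
case/and3P => /proper_dsP [P01 Pl] /proper_dsP [P01' Pl'] /cards1P [w Dw] hs.
have ws : w = centre s by apply/esym/set1P; rewrite -Dw inE.
have same u : u != centre s -> h' u = h u.
  move=> us; apply/eqP; rewrite eq_sym; apply: contraNT us => hu.
  have : u \in [set x | h x != h' x] by rewrite inE.
  by rewrite Dw ws inE.
clear Dw ws.
have osame : h' (centre (~~ s)) = h (centre (~~ s)) by apply: (same); case: (s).
have third_of z : z != h (centre s) -> z != h' (centre s) ->
    z = third (h (centre s)) (h' (centre s)) := third_unique hs.
split.
  have new : h' (centre s) = third (h c0) (h c1).
    apply: third_unique P01 _ _; case: (s) hs osame => /= hs osame;
      first [by rewrite eq_sym | by rewrite -osame | by rewrite -osame eq_sym].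
  by rewrite /centres /flip_pair; case: (s) new osame => /= -> ->.
apply/andP; split; first by rewrite other_centres osame.
apply/forallP => v; apply/implyP => /andP [v2 /eqP vs].
have vs' : v != centre s by apply: contraTneq v2 => ->; case: (s).
rewrite other_centres (third_of (h (centre _))); last first.
- by rewrite -osame; case: (s) P01' {hs same osame third_of}; rewrite //= eq_sym.
- by case: (s) P01 {hs same osame third_of}; rewrite //= eq_sym.
apply/eqP/third_of; last by rewrite -vs Pl'.
by rewrite same // -vs Pl.
Qed.

Lemma step_reach h h' b2 a0 a2 b1 : col_adj G h h' -> reach_inv (centres h) b2 a0 a2 b1 ->
  reach_inv (centres h') (b2 || aligned true 2%R h') (a0 || aligned false 0%R h')
                         (a2 || aligned false 2%R h') (b1 || aligned true 1%R h').
Proof.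
move=> hh' inv; have [P01 _] := proper_dsP _ (proj1 (andP hh')).
have [/eqP -> | moved] := boolP (centres h' == centres h).
  by apply: (reach_inv_mono inv); apply/implyP => ->.
have [s hs] : exists s, h (centre s) != h' (centre s).
  case: (h c0 =P h' c0) => [e0 | /eqP ne0]; last by exists false.
  by exists true; apply: contraNneq moved => e1; rewrite /centres -e0 -e1.
have [-> al] := centre_step hh' hs.
have upd flag t z :
    (flag || (s == t) && (other s (centres h) == z)) ==> (flag || aligned t z h').
  by apply/implyP => /orP [-> // | /andP [/eqP <- /eqP <-]]; rewrite al orbT.
have := allP (allP (allP (allP (allP (allP (allP reach_inv_flip_table _ (mem_Z3_enum (h c0)))
  _ (mem_Z3_enum (h c1))) _ (mem_bools s)) _ (mem_bools b2)) _ (mem_bools a0))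
  _ (mem_bools a2)) _ (mem_bools b1).
rewrite P01 inv => /implyP/(_ isT) inv'.
by apply: (reach_inv_mono inv'); apply: upd.
Qed.

Lemma walk_reach h p b2 a0 a2 b1 :
  path (col_adj G) h p -> reach_inv (centres h) b2 a0 a2 b1 ->
  reach_inv (centres (last h p))
    (b2 || has (aligned true 2%R) p) (a0 || has (aligned false 0%R) p)
    (a2 || has (aligned false 2%R) p) (b1 || has (aligned true 1%R) p).
Proof.
elim: p h b2 a0 a2 b1 => [|h' p IH] h b2 a0 a2 b1 /=; first by rewrite !orbF.
by case/andP=> hh' hp inv; rewrite !orbA; apply: IH hp (step_reach hh' inv).
Qed.

Definition far_src : colouring :=
  [ffun v : V => if (v == c0) || (2 <= v) && side v then 0%R else 1%R].

(* The first [(a + b) %/ 2] leaves must change twice if the walk goes through (2,1),(2,0),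
   the others if it goes through (0,2),(1,2). *)
Definition far_dst : colouring :=
  [ffun v : V => if v < 2 then (if v == c0 then 1%R else 0%R)
                 else if v < (a + b) %/ 2 + 2 then (if side v then 1%R else 2%R)
                 else (if side v then 2%R else 0%R)].

Lemma far_src_leaf v : 2 <= v -> far_src v = if side v then 0%R else 1%R.
Proof. by move=> v2; rewrite ffunE v2; case: eqP => // v0; move: v2; rewrite v0. Qed.

Lemma far_dst_leaf v : 2 <= v ->
  far_dst v = if v < (a + b) %/ 2 + 2 then (if side v then 1%R else 2%R)
              else (if side v then 2%R else 0%R).
Proof. by move=> v2; rewrite ffunE ltnNge v2. Qed.

Lemma proper_far_src : proper3 G far_src.
Proof.
apply/proper_dsP; split; first by rewrite !ffunE.
by move=> v v2; rewrite far_src_leaf // !ffunE; case: (side v).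
Qed.

Lemma proper_far_dst : proper3 G far_dst.
Proof.
apply/proper_dsP; split; first by rewrite !ffunE.
by move=> v v2; rewrite far_dst_leaf // !ffunE; case: (side v); case: (_ < _).
Qed.

Lemma far_walk_lower p : path (col_adj G) far_src p -> last far_src p = far_dst ->
  3 * (a + b + 2) %/ 2 <= size p.
Proof.
move=> hp hl; set m := (a + b) %/ 2.
have inv0 : reach_inv (centres far_src) false false false false by rewrite /centres !ffunE.
have := walk_reach hp inv0; rewrite hl /centres !ffunE /= => /and3P [_ ev _].
have in_walk k : k \in p -> k \in far_src :: p by move=> kp; rewrite inE kp orbT.
case/orP: ev => /andP [/hasP [k1 /in_walk k1p /alignedP [k1c k1l]]]
                      /hasP [k2 /in_walk k2p /alignedP [k2c k2l]].
- have : \sum_(v : V) (1 + (0 <= v < 1) + (2 <= v < m + 2)) <= size p.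
    apply: walk_lower_bound hp _ => v; rewrite hl.
    case: (leqP 2 v) => [v2 | /centre_cases [] ->]; last 2 first.
    + by exists k1; rewrite // k1c !ffunE.
    + by exists far_src; rewrite ?mem_head // !ffunE.
    rewrite far_src_leaf // far_dst_leaf //; case sv: (side v).
    + by exists k1; rewrite // k1l // -/m; case: (ltnP v (m + 2)) => vm /=; lia.
    + by exists k2; rewrite // k2l // -/m; case: (ltnP v (m + 2)) => vm /=; lia.
  by rewrite !big_split sum1_card card_ord !sum_range /= /m; lia.
- have : \sum_(v : V) (1 + (1 <= v < 2) + (m + 2 <= v < a + b + 2)) <= size p.
    apply: walk_lower_bound hp _ => v; rewrite hl.
    case: (leqP 2 v) => [v2 | /centre_cases [] ->]; last 2 first.
    + by exists far_src; rewrite ?mem_head // !ffunE /=; lia.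
    + by exists k1; rewrite // k1c !ffunE /=; lia.
    rewrite far_src_leaf // far_dst_leaf //; case sv: (side v).
    + by exists k2; rewrite // k2l // -/m; case: (ltnP v (m + 2)) => vm /=; lia.
    + by exists k1; rewrite // k1l // -/m; case: (ltnP v (m + 2)) => vm /=; lia.
  by rewrite !big_split sum1_card card_ord !sum_range /= /m; lia.
Qed.

End DoubleStar.

Theorem mainTheorem18 (a b : nat) :
  1 <= a -> 1 <= b -> a <= b + 4 -> b <= a + 4 ->
  diam_eq (proper3 (double_star a b)) (col_adj (double_star a b))
          ((3 * (a + b + 2)) %/ 2).
Proof.
move=> _ _ ab ba; split; first by move=> f g Pf Pg; apply: dist_upper.
exists (far_src a b), (far_dst a b); split; [exact: proper_far_src | exact: proper_far_dst |].
move=> k lt_k [p [hp hl sz]].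
by move: lt_k; rewrite ltnNge (leq_trans (far_walk_lower hp hl) sz).
Qed.
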